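(* Let $Z\subset\mathbb{S}_2$ be a finite nonempty set of points. Then the following are equivalent: (i) $Z\subset\widetilde{L_{12}}\cap(E_1\cup E_2)$; (ii) $\alpha(Z)=\alpha(2Z)=\alpha(3Z)=\alpha(4Z)=\alpha(5Z)=1$.
   Context: Let $P_1,P_2\in\mathbb{P}^2(\mathbb{C})$ be two general (distinct) points and $f\colon\mathbb{S}_2\to\mathbb{P}^2$ the blow-up at them, with exceptional curves $E_i=f^{-1}(P_i)$; let $H$ be the pullback of the class of a line and $\mathbb{L}_2=3H-E_1-E_2=-K_{\mathbb{S}_2}$. $L_{12}$ is the line through $P_1,P_2$ and $\widetilde{L_{12}}$ its proper transform in $\mathbb{S}_2$. For a finite set $Z\subset\mathbb{S}_2$ with ideal sheaf $\mathcal{I}_Z$ and a positive integer $m$, $\alpha(mZ)=\min\{d\ge 0:\ H^0(\mathbb{S}_2,d\mathbb{L}_2\otimes\mathcal{I}_Z^{(m)})\neq 0\}$, i.e. the least $d$ such that some effective divisor $D\in|d\mathbb{L}_2|$ has multiplicity at least $m$ at every point of $Z$. *)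

From HB Require Import structures.
From mathcomp Require Import all_boot all_order all_algebra.
From mathcomp Require Import Rstruct.
From mathcomp Require Import complex.
From mathcomp Require Import mpoly.
Set Implicit Arguments. Unset Strict Implicit. Unset Printing Implicit Defensive.
Import GRing.Theory Num.Theory.
Local Open Scope ring_scope.

Definition C : closedFieldType := (Rdefinitions.R)[i].

(* Homogeneous coordinates [x0:x1:x2] = [x:y:z] on P^2(C); variable 'X_0 = x,
   'X_1 = y, 'X_2 = z.  Coordinates are chosen so that (WLOG, by PGL_3)
   P1 = [1:0:0], P2 = [0:1:0]; hence L12 = {z = 0}. *)
Definition vec3 (x y z : C) : 'I_3 -> C := fun i => nth 0 [:: x; y; z] i.
Definition vec2 (s t : C) : 'I_2 -> C := fun i => nth 0 [:: s; t] i.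

Definition P1 : 'I_3 -> C := vec3 1 0 0.
Definition P2 : 'I_3 -> C := vec3 0 1 0.

(* For a homogeneous p in 3 variables this is the multiplicity of the plane
   curve {p = 0} at the projective point [v]; for p in 2 variables it is the
   usual multiplicity at the affine point v (char 0). *)
Definition mult_ge (n : nat) (p : {mpoly C[n]}) (v : 'I_n -> C) (m : nat) : Prop :=
  forall s : seq 'I_n, (size s < m)%N -> (foldr (fun i q => mderiv i q) p s).@[v] = 0.

(* Points of S_2 = Bl_{P1,P2} P^2:
   - [Base x y z] : the point [x:y:z] of P^2 \ {P1,P2};
   - [Exc1 a b]   : the point of E1 corresponding to the tangent direction
                    [a:b] at P1, in the local affine coordinates (y,z) (x=1);
   - [Exc2 a b]   : the point of E2 corresponding to the tangent direction
                    [a:b] at P2, in the local affine coordinates (x,z) (y=1). *)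
Inductive S2pt : Type :=
  | Base of C & C & C
  | Exc1 of C & C
  | Exc2 of C & C.

Definition S2wf (p : S2pt) : Prop :=
  match p with
  | Base x y z => ~ (x = 0 /\ y = 0 /\ z = 0) /\ ~ (y = 0 /\ z = 0) /\ ~ (x = 0 /\ z = 0)
  | Exc1 a b => ~ (a = 0 /\ b = 0)
  | Exc2 a b => ~ (a = 0 /\ b = 0)
  end.

(* Blow-up charts (local coordinates (s,t) = ('X_0,'X_1)), with the
   exceptional divisor given by s = 0. *)
(* near E1, direction [1:t] : y = s, z = s t *)
Definition chart1a : 3.-tuple {mpoly C[2]} := [tuple 1; 'X_0; 'X_0 * 'X_1].
(* near E1, direction [t:1] : y = s t, z = s *)
Definition chart1b : 3.-tuple {mpoly C[2]} := [tuple 1; 'X_0 * 'X_1; 'X_0].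
(* near E2, direction [1:t] : x = s, z = s t *)
Definition chart2a : 3.-tuple {mpoly C[2]} := [tuple 'X_0; 1; 'X_0 * 'X_1].
(* near E2, direction [t:1] : x = s t, z = s *)
Definition chart2b : 3.-tuple {mpoly C[2]} := [tuple 'X_0 * 'X_1; 1; 'X_0].

(* A nonzero section of d L_2 = d(3H - E1 - E2): a nonzero homogeneous form F
   of degree 3d with multiplicity >= d at P1 and at P2. *)
Definition is_section (d : nat) (F : {mpoly C[3]}) : Prop :=
  [/\ F != 0, F \is (3 * d)%N.-homog, mult_ge F P1 d & mult_ge F P2 d].

(* The effective divisor D = f^*{F=0} - d E1 - d E2 in |d L_2| has
   multiplicity >= m at the point p of S_2.  At a point of E_i the local
   equation of f^*{F=0} is F in the chart, which is s^d times the local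
   equation of D (s = local equation of E_i), so mult_p D >= m iff
   mult_p (F in the chart) >= m + d. *)
Definition mult_D_ge (d : nat) (F : {mpoly C[3]}) (p : S2pt) (m : nat) : Prop :=
  match p with
  | Base x y z => mult_ge F (vec3 x y z) m
  | Exc1 a b =>
      if a != 0 then mult_ge (comp_mpoly chart1a F) (vec2 0 (b / a)) (m + d)
      else mult_ge (comp_mpoly chart1b F) (vec2 0 (a / b)) (m + d)
  | Exc2 a b =>
      if a != 0 then mult_ge (comp_mpoly chart2a F) (vec2 0 (b / a)) (m + d)
      else mult_ge (comp_mpoly chart2b F) (vec2 0 (a / b)) (m + d)
  end.

Definition has_section (Z : seq S2pt) (m d : nat) : Prop :=
  exists F : {mpoly C[3]}, is_section d F /\ forall p, List.In p Z -> mult_D_ge d F p m.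

Definition alpha_is (Z : seq S2pt) (m d : nat) : Prop :=
  has_section Z m d /\ forall d', (d' < d)%N -> ~ has_section Z m d'.

(* p lies on the proper transform of L12 = {z = 0}; its points on E_i are the
   tangent direction of L12 at P_i, i.e. [1:0] in both local coordinate
   systems. *)
Definition on_L12t (p : S2pt) : Prop :=
  match p with
  | Base _ _ z => z = 0
  | Exc1 _ b => b = 0
  | Exc2 _ b => b = 0
  end.

Definition on_E12 (p : S2pt) : Prop :=
  match p with
  | Base _ _ _ => False
  | _ => True
  end.

(* In the chart (s, t) |-> [1 : s : s t] of the blow-up at P1, the monomial
   x^i y^j z^k of a cubic pulls back to s^(j+k) t^k, of degree j + 2k, which is
   < 6 unless the monomial is z^3.  A point of E1 of multiplicity >= 5 on a divisor
   of |L_2| is a point where the pullback of the cubic vanishes to order 6; after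
   a shear moving that point to the origin of the chart, the cubic becomes c z^3.
   So the cubic is the triple line through P1 in the direction of the point, and
   it passes through P2 only if that line is L12.  The same holds on E2 after
   swapping x and y, while off E1 u E2 no nonzero cubic has a point of
   multiplicity 5.  Conversely z^3, the triple line L12, pulls back to (s t)^3,
   which vanishes to order 6 at the points of the proper transform of L12 on
   E1 and E2, and a nonzero constant (d = 0) vanishes nowhere. *)

From HB Require Import structures.
From mathcomp Require Import all_boot all_order all_algebra.
From mathcomp Require Import Rstruct complex mpoly.
From mathcomp Require Import fingroup perm ring zify.
Set Implicit Arguments. Unset Strict Implicit. Unset Printing Implicit Defensive.
Import GRing.Theory Num.Theory.
Local Open Scope ring_scope.

Section CompMPoly.
Variable R : comNzRingType.

Lemma comp_mpolyA k n l (p : {mpoly R[k]}) (lq : k.-tuple {mpoly R[n]})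
    (lr : n.-tuple {mpoly R[l]}) :
  (p \mPo lq) \mPo lr = p \mPo [tuple tnth lq i \mPo lr | i < k].
Proof.
rewrite [p \mPo lq]comp_mpolyE [RHS]comp_mpolyE raddf_sum; apply: eq_bigr => m _.
rewrite /= comp_mpolyZ rmorph_prod; congr (_ *: _); apply: eq_bigr => i _.
by rewrite rmorphXn tnth_mktuple.
Qed.

Lemma mderivXU n (i j : 'I_n) : mderiv i ('X_j : {mpoly R[n]}) = (j == i)%:R.
Proof.
rewrite mderivX mnm1E; case: eqVneq => [->|_]; last by rewrite scale0r.
by rewrite -[X in (X - _)%MM]add0m addmK mpolyX0 scale1r.
Qed.

Lemma mderiv_comp k n (p : {mpoly R[k]}) (lq : k.-tuple {mpoly R[n]}) i :
  mderiv i (p \mPo lq) = \sum_(j < k) (mderiv j p \mPo lq) * mderiv i (tnth lq j).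
Proof.
pose chain q :=
  mderiv i (q \mPo lq) = \sum_(j < k) (mderiv j q \mPo lq) * mderiv i (tnth lq j).
have chainC c : chain c%:MP.
  rewrite /chain comp_mpolyC mderivC big1 // => j _.
  by rewrite mderivC comp_mpolyC mul0r.
have chainD f g : chain f -> chain g -> chain (f + g).
  rewrite /chain !raddfD /= => -> ->; rewrite -big_split; apply: eq_bigr => j _ /=.
  by rewrite mderivD raddfD mulrDl.
have chainM f g : chain f -> chain g -> chain (f * g).
  rewrite /chain rmorphM mderivM => -> ->; rewrite mulr_suml mulr_sumr -big_split.
  by apply: eq_bigr => j _ /=; rewrite mderivM rmorphD !rmorphM /=; ring.
have chainX j : chain 'X_j.
  rewrite /chain comp_mpolyXU -tnth_nth (bigD1 j) //= big1 => [|l /negbTE jl].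
    by rewrite mderivXU eqxx rmorph1 mul1r addr0.
  by rewrite mderivXU eq_sym jl rmorph0 mul0r.
rewrite -/(chain p) [p]mpolyE; elim/big_ind: _ => [|f g|m _].
- by rewrite -mpolyC0.
- exact: (chainD).
rewrite -mul_mpolyC; apply: (chainM) => //; rewrite mpolyXE_id.
elim/big_ind: _ => [|f g|l _]; [exact: (chainC 1) | exact: (chainM) |].
by elim: (m l) => [|e IH]; [exact: (chainC 1) | rewrite exprS; apply: (chainM)].
Qed.

Lemma dhomog_comp k n d (p : {mpoly R[k]}) (lq : k.-tuple {mpoly R[n]}) :
  p \is d.-homog -> (forall i, tnth lq i \is 1.-homog) -> p \mPo lq \is d.-homog.
Proof.
move=> hp hlq; rewrite comp_mpolyE big_seq; apply: rpred_sum => m mp; apply: dhomogZ.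
rewrite -(dhomog_mf hp mp) /= mdegE; elim/big_rec2: _ => [|i e q _ hq].
  exact: dhomog1.
by have := dhomogMn (m i) (hlq i); rewrite mul1n => /dhomogM; apply.
Qed.
End CompMPoly.

Section Swap.
Variables (R : comNzRingType) (n : nat).

Lemma msym_tpermK (i j : 'I_n) (p : {mpoly R[n]}) :
  msym (tperm i j) (msym (tperm i j) p) = p.
Proof. by rewrite -msymMm tperm2 msym1m. Qed.

Lemma dhomog_msym (s : 'S_n) d (p : {mpoly R[n]}) :
  p \is d.-homog -> msym s p \is d.-homog.
Proof. by rewrite !homog_piE -msym_pihomog => /eqP->. Qed.

Lemma meval_msym (s : 'S_n) (p : {mpoly R[n]}) v : (msym s p).@[v] = p.@[v \o s].
Proof.
rewrite -[msym s p]comp_mpoly_id msym_mPo comp_mpoly_meval; apply: meval_eq => i.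
by rewrite !tnth_mktuple mevalXU.
Qed.
End Swap.

Section Vanishing.
Variables (R : comNzRingType) (n : nat).
Implicit Types (p : {mpoly R[n]}) (v : 'I_n -> R).

(* [mult_ge] over an arbitrary ring; at [C] the two are convertible. *)
Definition vanishes_to p v k :=
  forall s : seq 'I_n, (size s < k)%N -> (foldr (fun i q => mderiv i q) p s).@[v] = 0.

Lemma vanishes_toW p v k j : (j <= k)%N -> vanishes_to p v k -> vanishes_to p v j.
Proof. by move=> jk H s sj; apply: H; apply: leq_trans jk. Qed.

Lemma eq_vanishes_to p v w k : v =1 w -> vanishes_to p v k -> vanishes_to p w k.
Proof. by move=> vw H s /H; rewrite (meval_eq _ vw). Qed.

Lemma foldr_mderivE p s :
  foldr (fun i q => mderiv i q) p s = mderivm (\sum_(i <- s) U_(i))%MM p.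
Proof.
elim: s => [|i s IH] /=; first by rewrite big_nil mderivm0m.
by rewrite big_cons addmC mderivmDm -IH mderivmU1m.
Qed.

Lemma vanishes_toP p v k :
  vanishes_to p v k <-> forall m, (mdeg m < k)%N -> (mderivm m p).@[v] = 0.
Proof.
split=> H => [m mk|s sk]; last first.
  rewrite foldr_mderivE; apply: H.
  by rewrite mdeg_sum (eq_bigr _ (fun i _ => mdeg1 i)) sum1_size.
rewrite mderivm_foldr; apply: H.
rewrite size_flatten /shape -map_comp sumnE big_map.
under eq_bigr do rewrite /= size_nseq.
by rewrite big_enum /= -mdegE.
Qed.

Lemma meval_origin p : p.@[fun=> 0] = p@_0.
Proof.
rewrite mevalE [in RHS](mpolyE p) raddf_sum /=; apply: eq_big_seq => m _.
rewrite mcoeffZ mcoeffX; case: eqVneq => [->|m0].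
  by rewrite big1 ?mulr1 // => i _; rewrite mnm0E expr0.
have [i mi] : exists i, m i != 0%N.
  apply/existsP; rewrite -negb_forall; apply: contra m0 => /forallP m0.
  by apply/eqP/mnmP => i; rewrite mnm0E; apply/eqP.
by rewrite (bigD1 i) //= expr0n (negbTE mi) mul0r !mulr0.
Qed.

Lemma mcoeff0_mderivm p m : (mderivm m p)@_0 = p@_m *+ \prod_(i < n) (m i)`!.
Proof.
rewrite mcoeff_mderivm addm0; congr (_ *+ _).
by apply: eq_bigr => i _; rewrite ffactnn.
Qed.

Definition shift v : n.-tuple {mpoly R[n]} := [tuple 'X_i + (v i)%:MP | i < n].

Lemma comp_shiftXU v i : 'X_i \mPo shift v = 'X_i + (v i)%:MP.
Proof. by rewrite comp_mpolyXU -tnth_nth tnth_mktuple. Qed.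

Lemma mderiv_shift p v i : mderiv i (p \mPo shift v) = mderiv i p \mPo shift v.
Proof.
rewrite mderiv_comp (bigD1 i) //= big1 => [|j ji].
  by rewrite tnth_mktuple mderivD mderivC mderivXU eqxx !addr0 mulr1.
by rewrite tnth_mktuple mderivD mderivC mderivXU (negbTE ji) addr0 mulr0.
Qed.

Lemma vanishes_to_shift p v k :
  vanishes_to (p \mPo shift v) (fun=> 0) k <-> vanishes_to p v k.
Proof.
have shiftE s : (foldr (fun i q => mderiv i q) (p \mPo shift v) s).@[fun=> 0] =
                (foldr (fun i q => mderiv i q) p s).@[v].
  have -> : foldr (fun i q => mderiv i q) (p \mPo shift v) s =
            foldr (fun i q => mderiv i q) p s \mPo shift v.
    by elim: s => //= i s ->; rewrite mderiv_shift.
  rewrite comp_mpoly_meval; apply: meval_eq => i.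
  by rewrite tnth_mktuple mevalD mevalXU mevalC add0r.
by split=> H s /H; rewrite shiftE.
Qed.
End Vanishing.

Section VanishingChar0.
Variables (R : idomainType) (n : nat).
Hypothesis R_char0 : [pchar R] =i pred0.
Implicit Types (p : {mpoly R[n]}) (v : 'I_n -> R).

Lemma mulrn_fact_eq0 (x : R) (m : 'X_{1..n}) :
  (x *+ \prod_(i < n) (m i)`! == 0) = (x == 0).
Proof.
have fact_gt0 : (0 < \prod_(i < n) (m i)`!)%N by rewrite prodn_gt0 // => i; rewrite fact_gt0.
by rewrite -mulr_natr mulf_eq0 ((pcharf0P R).1 R_char0) (gtn_eqF fact_gt0) orbF.
Qed.

Lemma vanishes_to_originP p k :
  vanishes_to p (fun=> 0) k <-> forall m, (mdeg m < k)%N -> p@_m = 0.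
Proof.
rewrite vanishes_toP; split=> H m /H; rewrite meval_origin mcoeff0_mderivm.
  by move/eqP; rewrite mulrn_fact_eq0 => /eqP.
by move=> ->; rewrite mul0rn.
Qed.

Lemma vanishes_to_msize p v k : (msize p <= k)%N -> vanishes_to p v k -> p = 0.
Proof.
move=> pk /vanishes_toP H; apply/eqP; apply: contraT => p0.
have lead_lt : (mdeg (mlead p) < k)%N by rewrite (leq_trans _ pk) // -mlead_deg.
(* Differentiating along the leading monomial leaves a nonzero constant. *)
have cst : mderivm (mlead p) p = ((mderivm (mlead p) p)@_0)%:MP.
  apply/mpolyP => m; rewrite mcoeffC; have [->|m0] := eqVneq m 0%MM; first by rewrite mulr1.
  rewrite mulr0 mcoeff_mderivm memN_msupp_eq0 ?mul0rn //; apply: msize_mdeg_ge.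
  by rewrite mdegD -(mlead_deg p0) -[X in (X < _)%N]addn0 ltn_add2l lt0n mdeg_eq0.
have := H _ lead_lt; rewrite cst mevalC mcoeff0_mderivm => /eqP.
by rewrite mulrn_fact_eq0 mleadc_eq0 (negbTE p0).
Qed.

Lemma msize_dhomog_le d p : p \is d.-homog -> (msize p <= d.+1)%N.
Proof.
by move=> hp; rewrite msizeE; apply/bigmax_leqP_seq => m mp _; rewrite (dhomog_mf hp mp).
Qed.

Lemma dhomog_vanishes_to d p v : p \is d.-homog -> vanishes_to p v d.+1 -> p = 0.
Proof. by move/msize_dhomog_le; apply: vanishes_to_msize. Qed.
End VanishingChar0.

Lemma big_ord3 (T : Type) (idx : T) (op : T -> T -> T) (F : 'I_3 -> T) :
  \big[op/idx]_(i < 3) F i = op (F 0) (op (F 1) (op (F 2) idx)).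
Proof.
by rewrite !big_ord_recl big_ord0; congr (op _ (op (F _) (op (F _) _))); apply: val_inj.
Qed.

Lemma mdeg3E (m : 'X_{1..3}) : mdeg m = (m 0%R + m 1%R + m 2%R)%N.
Proof. by rewrite mdegE big_ord3 addn0 addnA. Qed.

Lemma mpolyX3E (R : comNzRingType) (m : 'X_{1..3}) :
  'X_[m] = 'X_0 ^+ m 0%R * 'X_1 ^+ m 1%R * 'X_2 ^+ m 2%R :> {mpoly R[3]}.
Proof. by rewrite mpolyXE_id big_ord3 mulr1 mulrA. Qed.

Lemma ord3P (i : 'I_3) : [\/ i = 0, i = 1 | i = 2].
Proof.
by case: i => -[|[|[|//]]] lt_i3; [apply: Or31 | apply: Or32 | apply: Or33]; apply: val_inj.
Qed.

Lemma mnm3P (m m' : 'X_{1..3}) :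
  [/\ m 0%R = m' 0%R, m 1%R = m' 1%R & m 2%R = m' 2%R] -> m = m'.
Proof. by case=> e0 e1 e2; apply/mnmP => i; case: (ord3P i) => ->. Qed.

Lemma C_char0 : [pchar C] =i pred0.
Proof. exact: pchar_num. Qed.

Definition chart1a_mnm (m : 'X_{1..3}) : 'X_{1..2} :=
  (U_(0%R) *+ (m 1%R + m 2%R) + U_(1%R) *+ m 2%R)%MM.

Lemma comp_chart1a_X m : 'X_[m] \mPo chart1a = 'X_[chart1a_mnm m].
Proof.
rewrite mpolyX3E !rmorphM !rmorphXn /= !comp_mpolyXU /= mpolyXD -!mpolyXn.
by rewrite expr1n mul1r exprMn exprD mulrA.
Qed.

Lemma mdeg_chart1a_mnm m : mdeg (chart1a_mnm m) = (m 1%R + m 2%R + m 2%R)%N.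
Proof. by rewrite mdegD !mdegMn !mdeg1 !mul1n. Qed.

Lemma chart1a_mnm_inj d : {in [pred m | mdeg m == d] &, injective chart1a_mnm}.
Proof.
move=> m m' /eqP; rewrite /= mdeg3E => dm /eqP; rewrite mdeg3E => dm' E.
have := congr1 (fun m : 'X_{1..2} => m 0%R) E; have := congr1 (fun m : 'X_{1..2} => m 1%R) E.
rewrite /= !mnmDE !mulmnE !mnm1E /= => e1 e0.
apply: mnm3P; split; lia.
Qed.

Lemma mcoeff_comp_chart1a (F : {mpoly C[3]}) d m :
  F \is d.-homog -> mdeg m = d -> (F \mPo chart1a)@_(chart1a_mnm m) = F@_m.
Proof.
move=> hF dm; rewrite [in RHS](mpolyE F) comp_mpolyEX !raddf_sum /=.
apply: eq_big_seq => m' m'F; rewrite comp_chart1a_X !mcoeffZ !mcoeffX.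
by rewrite (inj_in_eq (@chart1a_mnm_inj d)) // inE ?dm ?(dhomog_mf hF m'F).
Qed.

Lemma chart1a_vanishes_to6E (F : {mpoly C[3]}) :
  F \is 3.-homog -> vanishes_to (F \mPo chart1a) (fun=> 0) 6 ->
  F = F@_(U_(2%R) *+ 3) *: 'X_2 ^+ 3.
Proof.
move=> hF /(vanishes_to_originP C_char0) G0.
apply/mpolyP => m; rewrite mcoeffZ mpolyXn mcoeffX.
have [<-|m_ne] := eqVneq (U_(2%R) *+ 3)%MM m; first by rewrite mulr1.
rewrite mulr0; have [dm|] := eqVneq (mdeg m) 3%N; last exact: dhomog_nemf_coeff.
rewrite -(mcoeff_comp_chart1a hF dm) G0 // mdeg_chart1a_mnm ltnNge.
apply: contra m_ne; move: dm; rewrite mdeg3E => dm le6.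
by apply/eqP/esym/mnm3P; rewrite !mulmnE !mnm1E /=; split; lia.
Qed.

Definition shear (t : C) : 3.-tuple {mpoly C[3]} := [tuple 'X_0; 'X_1; 'X_2 + t *: 'X_1].

Lemma shear_homog t i : tnth (shear t) i \is 1.-homog.
Proof.
have hX (j : 'I_3) : 'X_j \is [in C[3], 1.-homog] by rewrite dhomogX /= mdeg1.
by case: (ord3P i) => ->; rewrite /= ?hX // dhomogD ?hX ?dhomogZ ?hX.
Qed.

Lemma comp_shearK (F : {mpoly C[3]}) t : (F \mPo shear t) \mPo shear (- t) = F.
Proof.
rewrite comp_mpolyA -[RHS]comp_mpoly_id; congr (F \mPo _).
apply: eq_from_tnth => i; rewrite !tnth_mktuple.
case: (ord3P i) => -> /=; rewrite ?raddfD /= ?comp_mpolyZ !comp_mpolyXU //=.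
by rewrite scaleNr addrNK.
Qed.

Lemma chart1a_shift (F : {mpoly C[3]}) t :
  (F \mPo chart1a) \mPo shift (vec2 0 t) = (F \mPo shear t) \mPo chart1a.
Proof.
rewrite !comp_mpolyA; congr (F \mPo _); apply: eq_from_tnth => i; rewrite !tnth_mktuple.
case: (ord3P i) => ->; rewrite !(tnth_nth 0) /= ?rmorph1 ?rmorphM ?raddfD /=.
- by rewrite comp_mpolyXU.
- by rewrite comp_shiftXU comp_mpolyXU /vec2 /= mpolyC0 addr0.
rewrite comp_mpolyZ !comp_shiftXU !comp_mpolyXU /vec2 /= mpolyC0 addr0.
by rewrite mulrDr [_ * t%:MP]mulrC mul_mpolyC.
Qed.

Lemma chart1a_triple_line (F : {mpoly C[3]}) t :
  F \is 3.-homog -> vanishes_to (F \mPo chart1a) (vec2 0 t) 6 ->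
  F = (F \mPo shear t)@_(U_(2%R) *+ 3) *: ('X_2 - t *: 'X_1) ^+ 3.
Proof.
move=> hF /vanishes_to_shift; rewrite chart1a_shift.
move=> /(chart1a_vanishes_to6E (dhomog_comp hF (shear_homog t))) E.
rewrite -[LHS](comp_shearK F t) {1}E comp_mpolyZ rmorphXn /= comp_mpolyXU /=.
by rewrite scaleNr.
Qed.

Lemma comp_chart1b (F : {mpoly C[3]}) :
  F \mPo chart1b = msym (tperm 1 2) F \mPo chart1a.
Proof.
rewrite msym_mPo; congr (F \mPo _); apply: eq_from_tnth => i; rewrite tnth_mktuple.
by case: (ord3P i) => ->; rewrite ?tpermL ?tpermR ?tpermD // !(tnth_nth 0).
Qed.

Lemma comp_chart2 (F : {mpoly C[3]}) :
  F \mPo chart2a = msym (tperm 0 1) F \mPo chart1a /\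
  F \mPo chart2b = msym (tperm 0 1) F \mPo chart1b.
Proof.
rewrite !msym_mPo; split; congr (F \mPo _); apply: eq_from_tnth => i; rewrite tnth_mktuple;
  by case: (ord3P i) => ->; rewrite ?tpermL ?tpermR ?tpermD // !(tnth_nth 0).
Qed.

Lemma Exc1_mult5_on_L12t (F : {mpoly C[3]}) a b :
  F != 0 -> F \is 3.-homog -> F.@[P2] = 0 -> ~ (a = 0 /\ b = 0) ->
  mult_D_ge 1 F (Exc1 a b) 5 -> b = 0.
Proof.
move=> F0 hF FP2 ab; rewrite /mult_D_ge addn1; case: ifPn => [a0|/negPn/eqP a0].
  move=> /(chart1a_triple_line hF) E; move: FP2 F0; rewrite {}E.
  rewrite mevalZ rmorphXn /= mevalB mevalZ !mevalXU /P2 /vec3 /=.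
  move=> /eqP; rewrite mulr1 sub0r mulf_eq0 expf_eq0 /= oppr_eq0 => /orP[/eqP->|].
    by rewrite scale0r eqxx.
  by rewrite mulf_eq0 invr_eq0 (negbTE a0) orbF => /eqP.
(* Here the point is the direction of the line y = 0, so F is a multiple of y^3,
   which does not vanish at P2. *)
rewrite comp_chart1b => /(chart1a_triple_line (dhomog_msym _ hF)) E; exfalso.
have : F.@[vec3 0 0 1 \o tperm 1 2] = 0.
  rewrite -FP2; apply: meval_eq => i.
  by case: (ord3P i) => ->; rewrite /= ?tpermL ?tpermR ?tpermD.
rewrite -meval_msym {1}E mevalZ rmorphXn /= mevalB mevalZ !mevalXU /vec3 /=.
rewrite mulr0 subr0 expr1n mulr1 => c0.
by move: F0; rewrite -(msym_tpermK 1 2 F) E c0 scale0r msym0 eqxx.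
Qed.

Lemma Exc2_mult5_on_L12t (F : {mpoly C[3]}) a b :
  F != 0 -> F \is 3.-homog -> F.@[P1] = 0 -> ~ (a = 0 /\ b = 0) ->
  mult_D_ge 1 F (Exc2 a b) 5 -> b = 0.
Proof.
move=> F0 hF FP1 ab H; apply: (@Exc1_mult5_on_L12t (msym (tperm 0 1) F)) ab _.
- by apply: contraNneq F0 => E; rewrite -(msym_tpermK 0 1 F) E msym0.
- exact: dhomog_msym.
- rewrite meval_msym -FP1; apply: meval_eq => i.
  by case: (ord3P i) => ->; rewrite /= ?tpermL ?tpermR ?tpermD.
- by move: H; rewrite /mult_D_ge; case: (comp_chart2 F) => -> ->.
Qed.

Lemma mult_D_ge_const c p m : (0 < m)%N -> mult_D_ge 0 c%:MP p m -> c = 0.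
Proof.
move=> m0; case: p => [x y z|a b|a b] /=; try case: ifP => _;
  by rewrite ?comp_mpolyC => /(_ [::]); rewrite mevalC; apply; rewrite ?addn0.
Qed.

Lemma vanishes_to_XY3 : vanishes_to (('X_0 * 'X_1) ^+ 3 : {mpoly C[2]}) (vec2 0 0) 6.
Proof.
apply: (@eq_vanishes_to _ _ _ (fun=> 0)); first by move=> [[|[|]]].
apply/(vanishes_to_originP C_char0) => m; rewrite -mpolyXD mpolyXn mcoeffX.
by case: eqP => [<-|]; rewrite // mdegMn mdegD !mdeg1.
Qed.

Lemma L12_cube_section : is_section 1 ('X_2 ^+ 3).
Proof.
have cube_vanishes_at (v : 'I_3 -> C) : v 2%R = 0 -> mult_ge ('X_2 ^+ 3) v 1.
  by move=> v2 [|//] _; rewrite /= rmorphXn /= mevalXU v2 expr0n.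
split; first by rewrite mpolyXn -msize_poly_eq0 msizeX.
- by rewrite mpolyXn dhomogX /= mdegMn mdeg1.
- exact: cube_vanishes_at.
- exact: cube_vanishes_at.
Qed.

Lemma L12_cube_mult_D p m :
  S2wf p -> on_L12t p -> on_E12 p -> (m <= 5)%N -> mult_D_ge 1 ('X_2 ^+ 3) p m.
Proof.
case: p => [//|a b|a b] /= wf b0 _ m5; subst b.
all: case: ifPn => [_|/negPn/eqP a0]; last by case: wf.
all: rewrite mul0r rmorphXn /= comp_mpolyXU /=.
all: by apply: vanishes_toW vanishes_to_XY3; rewrite addn1.
Qed.

Lemma has_section_deg0 Z m : Z <> [::] -> (0 < m)%N -> ~ has_section Z m 0.
Proof.
case: Z => [//|p Z] _ m0 [F [[F0 hF _ _] /(_ p (or_introl erefl))]].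
have FC := msize1_polyC (msize_dhomog_le hF); rewrite FC => /(mult_D_ge_const m0) c0.
by move: F0; rewrite FC c0 mpolyC0 eqxx.
Qed.

Lemma section_mult5_on_L12t F p :
  is_section 1 F -> S2wf p -> mult_D_ge 1 F p 5 -> on_L12t p /\ on_E12 p.
Proof.
case=> F0 hF /(_ [::] isT) FP1 /(_ [::] isT) FP2; case: p => [x y z|a b|a b] /= ab H.
- by move: F0; rewrite (dhomog_vanishes_to C_char0 hF (vanishes_toW _ H)) ?eqxx.
- by split=> //; apply: (Exc1_mult5_on_L12t F0 hF FP2 ab H).
- by split=> //; apply: (Exc2_mult5_on_L12t F0 hF FP1 ab H).
Qed.

Theorem theorem3 (Z : seq S2pt) :
  Z <> [::] -> (forall p, List.In p Z -> S2wf p) ->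
  ((forall p, List.In p Z -> on_L12t p /\ on_E12 p) <->
   (forall m : nat, (1 <= m <= 5)%N -> alpha_is Z m 1)).
Proof.
move=> Zne wf; split=> [onZ m /andP[m1 m5] | alphaZ p pZ].
  split=> [|d]; last by rewrite ltnS leqn0 => /eqP->; apply: has_section_deg0.
  exists ('X_2 ^+ 3); split=> [|p pZ]; first exact: L12_cube_section.
  by have [L E] := onZ p pZ; apply: L12_cube_mult_D (wf p pZ) L E m5.
have [[F [FS HZ]] _] := alphaZ 5%N isT.
exact: section_mult5_on_L12t FS (wf p pZ) (HZ p pZ).
Qed.
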